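(* Let $H=\bigcup_i K_{n_i}$ be a disjoint union of complete graphs with all $n_i\ge 1$. Then for every connected graph $G$, $\mathrm{gp}(G\odot H)=\omega((G\odot H)_{\rm SR})$.
   Context: All graphs are finite and simple. For a connected graph $G$, $d_G(u,v)$ is the distance, and a geodesic is a shortest path. A set $S\subseteq V(G)$ is a general position set if no three pairwise distinct vertices of $S$ lie on a common geodesic; $\mathrm{gp}(G)$ is the maximum cardinality of a general position set. A vertex $u$ is maximally distant from $v$ if every neighbor $w$ of $u$ satisfies $d_G(v,w)\le d_G(u,v)$; $u,v$ are mutually maximally distant (MMD) if each is maximally distant from the other. The strong resolving graph $G_{\rm SR}$ has vertex set $V(G)$, distinct vertices adjacent iff MMD in $G$. $\omega$ is the clique number. The corona $G\odot H$, for $V(G)=\{v_1,\dots,v_n\}$, is obtained from the disjoint union of $G$ and $n$ disjoint copies $H_1,\dots,H_n$ of $H$ by joining $v_i$ to every vertex of $H_i$, for each $i$. *)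

From mathcomp Require Import all_boot.
Set Implicit Arguments. Unset Strict Implicit. Unset Printing Implicit Defensive.

Section Graphs.
Variable T : finType.
Variable e : rel T.

Definition simple_graph : Prop := symmetric e /\ irreflexive e.

Definition connected_graph : Prop := 0 < #|T| /\ forall x y : T, connect e x y.

Definition walkb (x y : T) (k : nat) : bool :=
  [exists p : k.-tuple T, path e x p && (last x p == y)].

(* distance: least k with a walk of length k (#|T| if unreachable) *)
Definition dist (x y : T) : nat := find (walkb x y) (iota 0 #|T|).

Definition geodesic (x : T) (p : seq T) : bool :=
  path e x p && (size p == dist x (last x p)).

(* a, b, c lie on a common geodesic (geodesics have at most #|T| edges) *)
Definition on_common_geodesic (a b c : T) : bool :=
  [exists x : T, [exists k : 'I_#|T|.+1, [exists p : k.-tuple T,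
     geodesic x p && [&& a \in x :: p, b \in x :: p & c \in x :: p]]]].

Definition gp_set (S : {set T}) : bool :=
  [forall a in S, forall b in S, forall c in S,
     [&& a != b, b != c & a != c] ==> ~~ on_common_geodesic a b c].

Definition gp : nat := \max_(S : {set T} | gp_set S) #|S|.

Definition max_distant (u v : T) : bool :=
  [forall w, e u w ==> (dist v w <= dist u v)].

Definition mmd (u v : T) : bool := max_distant u v && max_distant v u.

Definition strong_resolving : rel T := fun u v => (u != v) && mmd u v.

Definition is_clique (S : {set T}) : bool :=
  [forall x in S, forall y in S, (x != y) ==> e x y].

Definition clique_number : nat := \max_(S : {set T} | is_clique S) #|S|.
End Graphs.

(* corona G ⊙ H: vertex inl v = v in G, inr (v, u) = vertex u of the copy H_v *)
Definition corona (T U : finType) (eG : rel T) (eH : rel U) : rel (T + (T * U)) :=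
  fun a b => match a, b with
  | inl x, inl y => eG x y
  | inl x, inr (v, _) => x == v
  | inr (v, _), inl x => x == v
  | inr (v, u), inr (v', u') => (v == v') && eH u u'
  end.

(* H is a (nonempty) disjoint union of complete graphs K_{n_i}, n_i >= 1:
   vertices are partitioned into blocks (labelled by f), each block a clique,
   no edges between blocks. *)
Definition disjoint_union_of_complete_graphs (U : finType) (eH : rel U) : Prop :=
  0 < #|U| /\ exists f : U -> nat, forall u v, eH u v = (u != v) && (f u == f v).

(* Every vertex (x, u) of the copy H_x is simplicial in G ⊙ H: its neighbours, x and
   the rest of the block of u in H_x, form a clique.  A simplicial vertex is never
   interior to a geodesic and is maximally distant from every other vertex, so the
   simplicial vertices form both a general position set and a clique of (G ⊙ H)_SR.
   Conversely, a non-simplicial vertex x is maximally distant from no vertex v: for v in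
   H_x take a neighbour of x not adjacent to v, otherwise take any (x, u0), one step
   farther from v than x.  So the only cliques of (G ⊙ H)_SR containing x are {x}.
   A general position set containing x and some (x, u) lies in x plus the block of u,
   and a non-simplicial x leaves a simplicial vertex outside it; a general position set
   with no such pair injects into the copies by x |-> (x, u0).  Hence gp and ω both equal
   the number of simplicial vertices. *)

From mathcomp Require Import all_boot zify.
Set Implicit Arguments. Unset Strict Implicit. Unset Printing Implicit Defensive.

Lemma bigmax_card_attained (V : finType) (P : pred {set V}) (A : {set V}) :
  P A -> (forall B, P B -> #|B| <= #|A|) -> \max_(B | P B) #|B| = #|A|.
Proof.
move=> PA maxA; apply/eqP; rewrite eqn_leq (leq_bigmax_cond _ PA) andbT.
exact/bigmax_leqP.
Qed.

Definition simplicial (V : finType) (e : rel V) (u : V) : bool :=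
  [forall w1, forall w2, [&& e u w1, e u w2 & w1 != w2] ==> e w1 w2].

Section SimpleGraph.
Variables (V : finType) (e : rel V).
Hypotheses (e_sym : symmetric e) (e_connected : forall x y, connect e x y).

Lemma walkbP x y k :
  reflect (exists p, [/\ path e x p, last x p = y & size p = k]) (walkb e x y k).
Proof.
apply: (iffP existsP) => [[p /andP[xp /eqP <-]] | [p [xp <- <-]]].
  by exists p; rewrite size_tuple.
by exists (in_tuple p); rewrite xp eqxx.
Qed.

Lemma dist_le_size x p : path e x p -> dist e x (last x p) <= size p.
Proof.
move=> xp; rewrite /dist; have [lt_pV|] := ltnP (size p) #|V|; last first.
  by apply: leq_trans; rewrite -[X in _ <= X](size_iota 0) find_size.
rewrite leqNgt; apply/negP => /(before_find 0); rewrite nth_iota // add0n.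
by move/negbT/negP; apply; apply/walkbP; exists p.
Qed.

Lemma gp_set_no_common_geodesic S a b c :
  gp_set e S -> a \in S -> b \in S -> c \in S -> [&& a != b, b != c & a != c] ->
  ~~ on_common_geodesic e a b c.
Proof.
move=> /forallP/(_ a)/implyP gpS Sa Sb Sc; move: (gpS Sa).
by move=> /forallP/(_ b)/implyP/(_ Sb)/forallP/(_ c)/implyP/(_ Sc)/implyP.
Qed.

Lemma is_clique_rel (r : rel V) S a b :
  is_clique r S -> a \in S -> b \in S -> a != b -> r a b.
Proof.
by move=> /forallP/(_ a)/implyP clS Sa; move: (clS Sa) => /forallP/(_ b)/implyP Sb /Sb/implyP.
Qed.

Lemma dist_edge x y : e x y -> dist e x y <= 1.
Proof. by move=> exy; apply: (dist_le_size (p := [:: y])); rewrite /= exy. Qed.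

Lemma geodesic_size_le x p q :
  geodesic e x p -> path e x q -> last x q = last x p -> size p <= size q.
Proof. by case/andP=> _ /eqP -> xq <-; apply: dist_le_size. Qed.

Lemma geodesic_on_common_geodesic x p a b c :
  geodesic e x p -> a \in x :: p -> b \in x :: p -> c \in x :: p ->
  on_common_geodesic e a b c.
Proof.
move=> gp ap bp cp; have size_p : size p < #|V|.+1.
  by case/andP: gp => _ /eqP ->; rewrite ltnS /dist -[X in _ <= X](size_iota 0) find_size.
apply/existsP; exists x; apply/existsP; exists (Ordinal size_p); apply/existsP.
by exists (in_tuple p); rewrite /= gp ap bp cp.
Qed.

Lemma dist_path x y :
  exists p, [/\ path e x p, last x p = y & size p = dist e x y].
Proof.
have [p xp ->] := connectP (e_connected x y).
have [q xq uq _] := shortenP xp.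
have ltqV : size q < #|V|.
  by have := max_card (mem (x :: q)); rewrite (card_uniqP uq).
have has_walk : has (walkb e x (last x q)) (iota 0 #|V|).
  by apply/hasP; exists (size q); [rewrite mem_iota | apply/walkbP; exists q].
have := nth_find 0 has_walk; rewrite -/(dist e x _) nth_iota ?add0n.
  by move/walkbP.
by rewrite -(size_iota 0 #|V|) -has_find.
Qed.

Lemma dist_triangle x y z : dist e x z <= dist e x y + dist e y z.
Proof.
have [p [xp <- <-]] := dist_path x y; have [q [yq <- <-]] := dist_path (last x p) z.
by rewrite -size_cat -last_cat dist_le_size // cat_path xp.
Qed.

Lemma dist_gt1 x y : x != y -> ~~ e x y -> 1 < dist e x y.
Proof.
have [[|z [|? ?]] [xp <- <-]] := dist_path x y => //=; first by rewrite eqxx.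
by move: xp => /= /andP[-> _]; rewrite ?orbT.
Qed.

Lemma dist_sym x y : dist e x y = dist e y x.
Proof.
suff dist_le_sym a b : dist e a b <= dist e b a by apply/eqP; rewrite eqn_leq !dist_le_sym.
have [p [bp <- <-]] := dist_path b a.
set q := rev (belast b p).
have last_q : last (last b p) q = b.
  by rewrite {}/q; case/lastP: p {bp} => //= p c; rewrite belast_rcons rev_cons last_rcons.
have <- : size q = size p by rewrite size_rev size_belast.
rewrite -{2}last_q dist_le_size // rev_path.
by apply: sub_path bp => u v; rewrite e_sym.
Qed.

Lemma simplicialP u w1 w2 :
  simplicial e u -> e u w1 -> e u w2 -> w1 != w2 -> e w1 w2.
Proof.
by move=> /forallP/(_ w1)/forallP/(_ w2)/implyP su uw1 uw2 w12; apply: su; rewrite uw1 uw2.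
Qed.

Lemma simplicialPn u :
  reflect (exists w1 w2, [/\ e u w1, e u w2, w1 != w2 & ~~ e w1 w2]) (~~ simplicial e u).
Proof.
apply: (iffP idP) => [/forallPn[w1 /forallPn[w2]] | [w1 [w2 [uw1 uw2 w12 /negP nw12]]]].
  by rewrite negb_imply => /andP[/and3P[uw1 uw2 w12] nw12]; exists w1, w2.
by apply/negP => su; apply/nw12/(simplicialP su).
Qed.

Lemma simplicial_max_distant u v : simplicial e u -> v != u -> max_distant e u v.
Proof.
move=> su vu; apply/forallP => w; apply/implyP => uw; rewrite (dist_sym u v).
have [p [vp last_p <-]] := dist_path v u.
case/lastP: p vp last_p => [/= _ vu'|q z]; first by rewrite vu' eqxx in vu.
rewrite rcons_path last_rcons size_rcons => /andP[vq yz] zu; subst z.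
have := dist_le_size vq; set y := last v q => dist_vy.
have [<-|yw] := eqVneq y w; first exact: ltnW.
apply: leq_trans (dist_triangle v y w) _; rewrite -addn1 leq_add // dist_edge //.
by apply: (simplicialP su) => //; rewrite e_sym.
Qed.

Lemma simplicial_strong_resolving_clique :
  is_clique (strong_resolving e) [set u | simplicial e u].
Proof.
apply/forallP => u; apply/implyP; rewrite inE => su.
apply/forallP => v; apply/implyP; rewrite inE => sv; apply/implyP => uv.
by rewrite /strong_resolving /mmd uv !simplicial_max_distant // eq_sym.
Qed.

Lemma geodesic_interior_not_simplicial x p m :
  geodesic e x p -> m \in p -> m != last x p -> ~~ simplicial e m.
Proof.
move=> g mp ml; move: g ml; case/splitPr: mp => p1 [|z p2] g; first by rewrite last_cat eqxx.
move=> _; apply/negP => sm; have /andP[] := g.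
rewrite cat_path /= => /andP[xp1 /and3P[ym mz zp2]] _; set y := last x p1 in ym.
(* the neighbours y and z of m are equal or adjacent, so m can be bypassed *)
have [yz|yz] := eqVneq y z.
  have := geodesic_size_le g (q := p1 ++ p2).
  rewrite cat_path xp1 -/y yz zp2 !last_cat -/y yz !size_cat /= => /(_ isT erefl).
  lia.
have := geodesic_size_le g (q := p1 ++ z :: p2).
have my : e m y by rewrite e_sym.
rewrite cat_path xp1 /= -/y (simplicialP sm my mz yz) zp2 !last_cat !size_cat /=.
by move=> /(_ isT erefl); lia.
Qed.

Lemma simplicial_gp_set : gp_set e [set u | simplicial e u].
Proof.
apply/forallP => a; apply/implyP; rewrite inE => sa.
apply/forallP => b; apply/implyP; rewrite inE => sb.
apply/forallP => c; apply/implyP; rewrite inE => sc; apply/implyP => /and3P[ab bc ac].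
apply/negP => /existsP[x /existsP[k /existsP[p /andP[g /and3P[ap bp cp]]]]].
(* at most two of the three distinct vertices are endpoints of the geodesic *)
have [m [mp mx ml sm]] :
    exists m, [/\ m \in x :: val p, m != x, m != last x p & simplicial e m].
  have [/andP[ax al]|] := boolP ((a != x) && (a != last x p)); first by exists a.
  have [/andP[bx bl]|] := boolP ((b != x) && (b != last x p)); first by exists b.
  have [/andP[cx cl]|] := boolP ((c != x) && (c != last x p)); first by exists c.
  rewrite !negb_and !negbK => hc hb ha; move: ha hb hc ab bc ac.
  by move=> /orP[]/eqP-> /orP[]/eqP-> /orP[]/eqP->; rewrite ?eqxx.
move: mp; rewrite inE (negbTE mx) /= => mp.
by rewrite (negbTE (geodesic_interior_not_simplicial g mp ml)) in sm.
Qed.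

Lemma simplicial_neighbor_not_max_distant v a :
  simplicial e v -> e v a -> ~~ simplicial e a -> ~~ max_distant e a v.
Proof.
move=> sv va /simplicialPn[w1 [w2 [aw1 aw2 w12 nw12]]].
have [w [aw wv vw]] : exists w, [/\ e a w, w != v & ~~ e v w].
  have [w1v|w1v] := eqVneq w1 v; first by exists w2; rewrite -w1v eq_sym.
  have [w2v|w2v] := eqVneq w2 v; first by exists w1; rewrite -w2v (e_sym w2).
  case v1: (e v w1); last by exists w1; rewrite v1.
  case v2: (e v w2); last by exists w2; rewrite v2.
  by rewrite (simplicialP sv v1 v2 w12) in nw12.
apply/forallPn; exists w; rewrite negb_imply aw /= -ltnNge.
have av : e a v by rewrite e_sym.
by apply: leq_ltn_trans (dist_edge av) (dist_gt1 _ vw); rewrite eq_sym.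
Qed.

End SimpleGraph.

Section Corona.
Variables (T U : finType) (eG : rel T) (eH : rel U) (f : U -> nat).
Hypotheses (eG_sym : symmetric eG) (eG_irr : irreflexive eG).
Hypothesis eG_connected : forall x y, connect eG x y.
Hypothesis eHE : forall u v, eH u v = (u != v) && (f u == f v).
Variables (x0 : T) (u0 : U).

Local Notation e := (corona eG eH).

Lemma corona_sym : symmetric e.
Proof.
move=> [x|[x u]] [y|[y v]] //=.
by rewrite !eHE [y == _]eq_sym [v == _]eq_sym [f v == _]eq_sym.
Qed.

Lemma corona_connect a b : connect e a b.
Proof.
have inl_connect x y : connect e (inl x) (inl y).
  have [p xp ->] := connectP (eG_connected x y).
  by apply/connectP; exists (map inl p); rewrite ?path_map ?last_map.
have base a' : exists2 x, connect e a' (inl x) & connect e (inl x) a'.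
  by case: a' => [x|[x u]]; exists x; rewrite ?connect0 ?connect1 //= eqxx.
have [x ax _] := base a; have [y _ yb] := base b.
exact: connect_trans ax (connect_trans (inl_connect x y) yb).
Qed.

Lemma simplicial_inr x u : simplicial e (inr (x, u)).
Proof.
apply/forallP => w1; apply/forallP => w2; apply/implyP.
case: w1 => [y1|[y1 u1]]; case: w2 => [y2|[y2 u2]] /=.
- by case/and3P => /eqP <- /eqP <-; rewrite eqxx.
- by case/and3P => /eqP <- /andP[/eqP <- _] _.
- by case/and3P => /andP[/eqP <- _] /eqP <- _.
rewrite !eHE => /and3P[/and3P[/eqP <- _ /eqP f1] /and3P[/eqP <- _ /eqP f2] w12].
by rewrite eqxx -f1 -f2 eqxx andbT; apply: contra w12 => /eqP ->.
Qed.

Definition in_copy (x : T) (z : T + T * U) : bool :=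
  if z is inr (y, _) then y == x else false.

Lemma path_from_copy x u p :
  path e (inr (x, u)) p -> ~~ in_copy x (last (inr (x, u)) p) ->
  exists q, [/\ path e (inl x) q, last (inl x) q = last (inr (x, u)) p & size q < size p].
Proof.
elim: p u => [|w p IHp] u /=; first by rewrite eqxx.
case: w => [y|[y v]] /= /andP[xw wp] last_out.
  by move/eqP: xw wp last_out => ->; exists p.
case/andP: xw => /eqP <- _ in wp last_out *.
by have [q [xq <- ltqp]] := IHp v wp last_out; exists q; split=> //; apply: ltnW.
Qed.

Lemma dist_from_copy x u z :
  ~~ in_copy x z -> dist e (inr (x, u)) z = (dist e (inl x) z).+1.
Proof.
move=> z_out; apply/eqP; rewrite eqn_leq; apply/andP; split.
  apply: leq_trans (dist_triangle corona_connect _ (inl x) _) _.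
  by rewrite -add1n leq_add2r dist_edge //= eqxx.
have [p [xp last_p <-]] := dist_path corona_connect (inr (x, u)) z.
have p_out : ~~ in_copy x (last (inr (x, u)) p) by rewrite last_p.
have [q [xq last_q lt_qp]] := path_from_copy xp p_out.
by apply: leq_ltn_trans lt_qp; rewrite -last_p -last_q dist_le_size.
Qed.

Lemma on_common_geodesic_copy_out x u z :
  ~~ in_copy x z -> on_common_geodesic e (inr (x, u)) (inl x) z.
Proof.
move=> z_out; have [p [xp last_p size_p]] := dist_path corona_connect (inl x) z.
apply: (@geodesic_on_common_geodesic _ _ (inr (x, u)) (inl x :: p)).
- by rewrite /geodesic /= eqxx xp /= last_p dist_from_copy // size_p.
- exact: mem_head.
- by rewrite !inE eqxx orbT.
- by rewrite -last_p; apply: (mem_last (inr (x, u)) (inl x :: p)).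
Qed.

Lemma on_common_geodesic_copy_blocks x u1 u2 :
  f u1 != f u2 -> on_common_geodesic e (inr (x, u1)) (inl x) (inr (x, u2)).
Proof.
move=> f12; apply: (@geodesic_on_common_geodesic _ _ (inr (x, u1)) [:: inl x; inr (x, u2)]);
  rewrite ?inE ?eqxx ?orbT //.
have ne12 : inr (x, u1) != inr (x, u2) :> T + T * U by apply: contra f12 => /eqP[->].
have nadj12 : ~~ e (inr (x, u1)) (inr (x, u2)) by rewrite /= eHE (negbTE f12) !andbF.
have := dist_le_size (e := e) (x := inr (x, u1)) (p := [:: inl x; inr (x, u2)]).
rewrite /geodesic /= !eqxx /= => /(_ isT) le2.
by rewrite eqn_leq le2 (dist_gt1 corona_connect ne12 nadj12).
Qed.

Definition block (x : T) (u : U) : {set T + T * U} :=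
  [set z | if z is inr (y, v) then (y == x) && (f v == f u) else false].

Lemma gp_set_sub_block S x u :
  gp_set e S -> inl x \in S -> inr (x, u) \in S -> S \subset inl x |: block x u.
Proof.
move=> gpS Sx Sxu; apply/subsetP => z Sz; rewrite !inE.
have [//|zx] := eqVneq z (inl x); have [z_in|z_out] := boolP (in_copy x z).
  case: z z_in Sz {zx} => [//|[y v]] /= /eqP -> Sz; rewrite eqxx /=.
  apply: contraT; rewrite eq_sym => fuv.
  have uv : inr (x, u) != inr (x, v) :> T + T * U by apply: contra fuv => /eqP[->].
  have := on_common_geodesic_copy_blocks x fuv.
  by rewrite (negbTE (gp_set_no_common_geodesic gpS Sxu Sx Sz _)) // uv.
have := on_common_geodesic_copy_out u z_out.
rewrite (negbTE (gp_set_no_common_geodesic gpS Sxu Sx Sz _)) // [inl x == _]eq_sym zx /=.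
by apply: contra z_out => /eqP <-; rewrite /= eqxx.
Qed.

Lemma not_simplicial_inl x :
  ~~ simplicial e (inl x) -> (exists y, eG x y) \/ (exists v1 v2, f v1 != f v2).
Proof.
case/simplicialPn => w1 [w2 [xw1 xw2 w12 nw12]].
case: w1 xw1 w12 nw12 => [y|[y1 v1]] /= xw1; first by left; exists y.
case: w2 xw2 => [y|[y2 v2]] /= xw2; first by left; exists y.
move: xw1 xw2 => /eqP <- /eqP <- w12; rewrite eqxx eHE /= => nw12.
right; exists v1, v2; apply: contra nw12 => ->; rewrite andbT.
by apply: contra w12 => /eqP ->.
Qed.

Lemma simplicial_outside_block x u :
  ~~ simplicial e (inl x) -> exists2 w, simplicial e w & w \notin inl x |: block x u.
Proof.
case/not_simplicial_inl => [[y xy] | [v1 [v2 f12]]].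
  exists (inr (y, u0)); first exact: simplicial_inr.
  by rewrite !inE /=; apply: contraL xy => /andP[/eqP -> _]; rewrite eG_irr.
have [v fv] : exists v, f v != f u.
  by have [f1|] := eqVneq (f v1) (f u); [exists v2; rewrite -f1 eq_sym | exists v1].
by exists (inr (x, v)); rewrite ?simplicial_inr // !inE /= eqxx (negbTE fv).
Qed.

Lemma block_simplicial x u : block x u \subset [set a | simplicial e a].
Proof. by apply/subsetP => -[y|[y v]]; rewrite !inE // simplicial_inr. Qed.

Lemma gp_set_card_le_meeting_copy S x u :
  gp_set e S -> inl x \in S -> inr (x, u) \in S -> #|S| <= #|[set a | simplicial e a]|.
Proof.
move=> gpS Sx Sxu; apply: leq_trans (subset_leq_card (gp_set_sub_block gpS Sx Sxu)) _.
have [sx|nsx] := boolP (simplicial e (inl x)).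
  by apply: subset_leq_card; rewrite subUset sub1set inE sx block_simplicial.
have [w sw] := simplicial_outside_block u nsx; rewrite in_setU1 negb_or => /andP[_ wB].
apply: leq_trans (subset_leq_card (_ : w |: block x u \subset _)).
  by rewrite !cardsU1 wB leq_add2r leq_b1.
by rewrite subUset sub1set inE sw block_simplicial.
Qed.

Lemma card_le_avoiding_copies (S : {set T + T * U}) :
  (forall x v, inl x \in S -> inr (x, v) \notin S) -> #|S| <= #|[set a | simplicial e a]|.
Proof.
move=> avoid; pose h (a : T + T * U) : T + T * U := if a is inl x then inr (x, u0) else a.
have h_inj : {in S &, injective h}.
  move=> [x|[x u]] [y|[y v]] Sa Sb /= hab //; first by case: hab => ->.
    by case: hab => <- <- in Sb; rewrite (negbTE (avoid _ _ Sa)) in Sb.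
  by case: hab => -> -> in Sa; rewrite (negbTE (avoid _ _ Sb)) in Sa.
rewrite -(card_in_imset h_inj); apply: subset_leq_card.
by apply/subsetP => _ /imsetP[[x|[x v]] _ ->]; rewrite inE simplicial_inr.
Qed.

Lemma gp_set_card_le S : gp_set e S -> #|S| <= #|[set a | simplicial e a]|.
Proof.
move=> gpS; have [/existsP[x /existsP[u /andP[Sx Sxu]]]|] :=
  boolP [exists x, exists u, (inl x \in S) && (inr (x, u) \in S)].
  exact: gp_set_card_le_meeting_copy gpS Sx Sxu.
move=> /existsPn avoid; apply: card_le_avoiding_copies => x v Sx.
by have /existsPn/(_ v) := avoid x; rewrite Sx.
Qed.

Lemma not_simplicial_not_max_distant a v :
  ~~ simplicial e a -> ~~ max_distant e a v.
Proof.
case: a => [x|[x u]] nsa; last by rewrite simplicial_inr in nsa.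
have [|v_out] := boolP (in_copy x v).
  case: v => [//|[y u]] /= /eqP ->.
  apply: (simplicial_neighbor_not_max_distant corona_sym corona_connect) nsa.
    exact: simplicial_inr.
  by rewrite /= eqxx.
apply/forallPn; exists (inr (x, u0)); rewrite /= eqxx /= -ltnNge.
by rewrite (dist_sym corona_sym corona_connect v) dist_from_copy.
Qed.

Lemma strong_resolving_clique_card_le C :
  is_clique (strong_resolving e) C -> #|C| <= #|[set a | simplicial e a]|.
Proof.
move=> clC; have [/subset_leq_card //|] := boolP (C \subset [set a | simplicial e a]).
case/subsetPn => a Ca; rewrite inE => nsa.
have C_a : C \subset [set a].
  apply/subsetP => v Cv; rewrite inE; apply: contraT; rewrite eq_sym => av.
  have /andP[_ /andP[mad _]] := is_clique_rel clC Ca Cv av.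
  by rewrite (negbTE (not_simplicial_not_max_distant v nsa)) in mad.
apply: leq_trans (subset_leq_card C_a) _; rewrite cards1 card_gt0.
by apply/set0Pn; exists (inr (x0, u0)); rewrite inE simplicial_inr.
Qed.

End Corona.

Theorem proposition3p2 (T U : finType) (eG : rel T) (eH : rel U) :
  simple_graph eG -> connected_graph eG ->
  disjoint_union_of_complete_graphs eH ->
  gp (corona eG eH) = clique_number (strong_resolving (corona eG eH)).
Proof.
move=> [eG_sym eG_irr] [/card_gt0P[x0 _] eG_connected] [/card_gt0P[u0 _] [f eHE]].
have e_sym := corona_sym eG_sym eHE.
have e_connected := corona_connect eH eG_connected.
have -> : gp (corona eG eH) = #|[set a | simplicial (corona eG eH) a]|.
  apply: bigmax_card_attained; first exact: simplicial_gp_set e_sym.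
  by move=> S; apply: gp_set_card_le eG_irr eG_connected eHE u0 S.
apply/esym/bigmax_card_attained.
  exact: simplicial_strong_resolving_clique e_sym e_connected.
by move=> C; apply: strong_resolving_clique_card_le eG_sym eG_connected eHE x0 u0 C.
Qed.
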